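(* Let $J=[0,+\infty)$ and let $A\colon J\to\mathcal{L}(\mathbb{R}^n)$ be of locally bounded variation on $J$ such that $I-\Delta^{-}A(t)$ is invertible for all $t\in(0,+\infty)$ and $I+\Delta^{+}A(t)$ is invertible for all $t\in J$. Let $U$ be the transition matrix of $\frac{dx}{d\tau}=D[A(t)x]$. Then the trivial solution of this equation is uniformly asymptotically stable if and only if there exist constants $\alpha,K>0$ such that $\|U(t,s_0)\|\le Ke^{-\alpha(t-s_0)}$ for all $t\ge s_0\ge 0$.
   Context: Here $\Delta^{+}A(t)=A(t^+)-A(t)$, $\Delta^{-}A(t)=A(t)-A(t^-)$. Integrals $\int_a^b \mathrm{d}[A(s)]x(s)$ are Perron–Stieltjes (Kurzweil–Stieltjes) integrals. A solution of $\frac{dx}{d\tau}=D[A(t)x]$ is a function $x$ with $x(b)-x(a)=\int_a^b\mathrm{d}[A(s)]x(s)$ for all $a,b$ in its interval of definition. The transition matrix $U\colon J\times J\to\mathcal{L}(\mathbb{R}^n)$ is the unique matrix function with $U(t,s)=I+\int_s^t\mathrm{d}[A(r)]U(r,s)$; the unique solution with $x(s_0)=x_0$ is $x(t,s_0,x_0)=U(t,s_0)x_0$ for $t\ge s_0$. The trivial solution is uniformly stable if for every $\varepsilon>0$ there is $\delta=\delta(\varepsilon)>0$ such that for all $s_0\ge0$, $\|x_0\|<\delta$ implies $\|x(t,s_0,x_0)\|<\varepsilon$ for all $t\ge s_0$. It is uniformly asymptotically stable if it is uniformly stable and there exists $\delta_0>0$ such that for each $\varepsilon>0$ there is $T=T(\varepsilon)\ge0$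 such that for all $s_0\ge0$ and $x_0$ with $\|x_0\|<\delta_0$, $\|x(t,s_0,x_0)\|<\varepsilon$ for all $t\ge s_0+T(\varepsilon)$. *)

From HB Require Import structures.
From mathcomp Require Import all_boot all_order all_algebra.
From mathcomp Require Import all_classical all_reals.
From mathcomp Require Import all_analysis.
Set Implicit Arguments. Unset Strict Implicit. Unset Printing Implicit Defensive.
Import Order.TTheory GRing.Theory Num.Theory.
Local Open Scope ring_scope.

Section KS.
Variable R : realType.

(* max-entry norm on (rectangular) matrices; for column vectors this is the
   sup norm on R^n.  All norms on finite-dimensional spaces are equivalent. *)
Definition mxnorm (p q : nat) (M : 'M[R]_(p, q)) : R :=
  \big[Num.max/0]_(i < p) \big[Num.max/0]_(j < q) `|M i j|.

Definition tagged_div (a b : R) (k : nat) (al ta : nat -> R) : Prop :=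
  al 0%N = a /\ al k = b /\
  forall j, (j < k)%N -> al j < al j.+1 /\ al j <= ta j <= al j.+1.

Definition delta_fine (delta : R -> R) (k : nat) (al ta : nat -> R) : Prop :=
  forall j, (j < k)%N ->
    ta j - delta (ta j) < al j /\ al j.+1 < ta j + delta (ta j).

Definition KS_sum (n m : nat) (A : R -> 'M[R]_n) (X : R -> 'M[R]_(n, m))
  (k : nat) (al ta : nat -> R) : 'M[R]_(n, m) :=
  \sum_(j < k) ((A (al j.+1) - A (al j)) *m X (ta j)).

Definition KS_integral (n m : nat) (a b : R) (A : R -> 'M[R]_n)
  (X : R -> 'M[R]_(n, m)) (I : 'M[R]_(n, m)) : Prop :=
  forall eps : R, 0 < eps ->
    exists delta : R -> R, (forall t, 0 < delta t) /\
      forall k al ta, tagged_div a b k al ta -> delta_fine delta k al ta ->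
        mxnorm (KS_sum A X k al ta - I) < eps.

Definition KS_int_eq (n m : nat) (a b : R) (A : R -> 'M[R]_n)
  (X : R -> 'M[R]_(n, m)) (I : 'M[R]_(n, m)) : Prop :=
  [/\ a < b -> KS_integral a b A X I,
      a = b -> I = 0 &
      b < a -> KS_integral b a A X (- I)].

Definition locally_BV_J (n : nat) (A : R -> 'M[R]_n) : Prop :=
  forall a b : R, 0 <= a -> a < b ->
    exists M : R, forall k (al : nat -> R),
      tagged_div a b k al al ->
      \sum_(j < k) mxnorm (A (al j.+1) - A (al j)) <= M.

Definition right_limit (n : nat) (A : R -> 'M[R]_n) (t : R) (L : 'M[R]_n) :=
  forall eps : R, 0 < eps -> exists d : R, 0 < d /\
    forall s, t < s < t + d -> mxnorm (A s - L) < eps.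

Definition left_limit (n : nat) (A : R -> 'M[R]_n) (t : R) (L : 'M[R]_n) :=
  forall eps : R, 0 < eps -> exists d : R, 0 < d /\
    forall s, t - d < s < t -> mxnorm (A s - L) < eps.

Definition transition_matrix (n : nat) (A : R -> 'M[R]_n)
  (U : R -> R -> 'M[R]_n) : Prop :=
  forall t s : R, 0 <= t -> 0 <= s ->
    KS_int_eq s t A (fun r => U r s) (U t s - 1%:M).

Definition sol (n : nat) (U : R -> R -> 'M[R]_n) (t s0 : R) (x0 : 'cV[R]_n)
  : 'cV[R]_n := U t s0 *m x0.

Definition unif_stable (n : nat) (U : R -> R -> 'M[R]_n) : Prop :=
  forall eps : R, 0 < eps -> exists delta : R, 0 < delta /\
    forall (s0 : R) (x0 : 'cV[R]_n), 0 <= s0 -> mxnorm x0 < delta ->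
      forall t, s0 <= t -> mxnorm (sol U t s0 x0) < eps.

Definition unif_asymp_stable (n : nat) (U : R -> R -> 'M[R]_n) : Prop :=
  unif_stable U /\
  exists delta0 : R, 0 < delta0 /\
    forall eps : R, 0 < eps -> exists T : R, 0 <= T /\
      forall (s0 : R) (x0 : 'cV[R]_n), 0 <= s0 -> mxnorm x0 < delta0 ->
        forall t, s0 + T <= t -> mxnorm (sol U t s0 x0) < eps.

End KS.

From HB Require Import structures.
From mathcomp Require Import all_boot all_order all_algebra.
From mathcomp Require Import all_classical all_reals.
From mathcomp Require Import all_analysis.
From mathcomp Require Import ring lra.
Import Order.TTheory GRing.Theory Num.Theory.
Local Open Scope ring_scope.
Set Implicit Arguments. Unset Strict Implicit. Unset Printing Implicit Defensive.

(* An exponential bound on U makes U bounded (uniform stability) and small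
   for large t - s (uniform attraction).  Conversely, uniform stability bounds
   ||U(t,s)|| by some C and uniform attraction gives ||U(t,s)|| <= q, with
   n q <= 1/2, once t - s >= T; the cocycle identity
   U(t,s) = U(t,s+T) U(s+T,s) then yields ||U(s + kT, s)|| <= C 2^-k, an
   exponential bound.  The cocycle identity is not part of the definition of
   U: it follows from uniqueness of bounded solutions vanishing at r, by
   continuation from r.  At the supremum of the zero set the solution is
   killed by I - Delta^- A, which is invertible; to the right of a zero, the
   variation of A is locally small, so the integral equation contracts. *)

Section RealFacts.
Variable R : realType.

Lemma exists_natr_mul_gt (M e : R) : 0 < e -> exists N : nat, M < N%:R * e.
Proof.
move=> e0; exists (Num.Def.archi_bound (`|M| / e)).
rewrite -ltr_pdivrMr //; apply: le_lt_trans (archi_boundP _).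
  by rewrite ler_pM2r ?invr_gt0 // ler_norm.
by rewrite divr_ge0 // ltW.
Qed.

Lemma exists_natr_mul_le_half (n : nat) : exists c : R, 0 < c /\ n%:R * c <= 2^-1.
Proof.
exists (2 * (n%:R + 1))^-1; split; first by rewrite invr_gt0 mulr_gt0 // ltr_wpDl.
rewrite invfM mulrCA ler_piMr ?invr_ge0 // ler_pdivrMr ?ltr_wpDl //.
by rewrite mul1r lerDl.
Qed.

Lemma pow_half_le_expR (C T x : R) : 0 <= C -> 0 < T -> 0 <= x ->
  C / 2 ^+ Num.truncn (x / T) <= 2 * C * expR (- (ln 2 / T) * x).
Proof.
move=> C0 T0 x0; have /andP [_ xk] := truncn_itv (divr_ge0 x0 (ltW T0)).
set k := Num.truncn _ in xk *.
have -> : - (ln 2 / T) * x = k.+1%:R * - ln 2 + ln 2 * (k.+1%:R - x / T).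
  by field; rewrite gt_eqF.
rewrite expRD expRM_natl expRN lnK ?posrE // exprVn exprS invfM.
rewrite mulrA (_ : 2 * C * _ = C / 2 ^+ k); last by rewrite mulrACA divff ?mul1r.
rewrite -[X in X <= _]mulr1 ler_wpM2l //.
  by rewrite divr_ge0 ?exprn_ge0.
rewrite (le_trans _ (expR_ge1Dx _)) // lerDl mulr_ge0 ?subr_ge0 ?ltW //.
by rewrite ln_gt0 // ltr1n.
Qed.

End RealFacts.

Section MxNorm.
Variable R : realType.
Implicit Types (p q : nat).

Lemma mxnorm_ge0 p q (M : 'M[R]_(p, q)) : 0 <= mxnorm M.
Proof.
rewrite /mxnorm; elim/big_ind: _ => // [x y hx hy|i _]; first by rewrite le_max hx.
by elim/big_ind: _ => // x y hx hy; rewrite le_max hx.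
Qed.

Lemma mxnorm_lub p q (M : 'M[R]_(p, q)) c :
  0 <= c -> (forall i j, `|M i j| <= c) -> mxnorm M <= c.
Proof.
move=> c0 hM; rewrite /mxnorm; elim/big_ind: _ => // [x y hx hy|i _].
  by rewrite ge_max hx hy.
by elim/big_ind: _ => // x y hx hy; rewrite ge_max hx hy.
Qed.

Lemma entry_le_mxnorm p q (M : 'M[R]_(p, q)) i j : `|M i j| <= mxnorm M.
Proof.
rewrite /mxnorm (bigD1 i) //= le_max; apply/orP; left.
by rewrite (bigD1 j) //= le_max lexx.
Qed.

Lemma mxnorm0 p q : mxnorm (0 : 'M[R]_(p, q)) = 0.
Proof.
apply/eqP; rewrite eq_le mxnorm_ge0 andbT.
by apply: mxnorm_lub => // i j; rewrite mxE normr0.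
Qed.

Lemma mxnormN p q (M : 'M[R]_(p, q)) : mxnorm (- M) = mxnorm M.
Proof.
apply/eqP; rewrite eq_le !mxnorm_lub ?mxnorm_ge0 // => i j.
  by have := entry_le_mxnorm (- M) i j; rewrite mxE normrN.
by rewrite mxE normrN entry_le_mxnorm.
Qed.

Lemma ler_mxnormD p q (M N : 'M[R]_(p, q)) :
  mxnorm (M + N) <= mxnorm M + mxnorm N.
Proof.
apply: mxnorm_lub => [|i j]; first by rewrite addr_ge0 ?mxnorm_ge0.
by rewrite mxE (le_trans (ler_normD _ _)) // lerD ?entry_le_mxnorm.
Qed.

Lemma ler_mxnormB p q (M N : 'M[R]_(p, q)) :
  mxnorm (M - N) <= mxnorm M + mxnorm N.
Proof. by rewrite -(mxnormN N) ler_mxnormD. Qed.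

Lemma ler_mxnormM p q r (M : 'M[R]_(p, q)) (N : 'M[R]_(q, r)) :
  mxnorm (M *m N) <= q%:R * mxnorm M * mxnorm N.
Proof.
apply: mxnorm_lub => [|i j]; first by rewrite !mulr_ge0 ?mxnorm_ge0.
rewrite mxE (le_trans (ler_norm_sum _ _ _)) //.
rewrite -mulrA mulr_natl -[X in _ *+ X]card_ord -sumr_const.
by apply: ler_sum => k _; rewrite normrM ler_pM ?entry_le_mxnorm.
Qed.

Lemma ler_mxnorm_sum p q k (F : 'I_k -> 'M[R]_(p, q)) :
  mxnorm (\sum_(j < k) F j) <= \sum_(j < k) mxnorm (F j).
Proof.
elim/big_rec2: _ => [|j y1 y2 _ h]; first by rewrite mxnorm0.
by rewrite (le_trans (ler_mxnormD _ _)) // lerD2l.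
Qed.

Lemma mxnorm_eps_eq0 p q (M : 'M[R]_(p, q)) c : 0 < c ->
  (forall e, 0 < e -> mxnorm M <= e * c) -> M = 0.
Proof.
move=> c0 small; apply/matrixP => i j; rewrite mxE; apply/eqP.
rewrite -normr_le0; apply/ler_addgt0Pr => e e0; rewrite add0r.
apply: le_trans (entry_le_mxnorm _ i j) _.
by have := small (e / c) (divr_gt0 e0 c0); rewrite divfK ?gt_eqF.
Qed.

End MxNorm.

Section TaggedDivision.
Variable R : realType.
Implicit Types (a b c : R) (al ta f g : nat -> R) (delta : R -> R).

Definition div_sum (V : zmodType) (F : R -> R -> R -> V) k al ta : V :=
  \sum_(j < k) F (al j) (al j.+1) (ta j).

Definition splice k f g (j : nat) : R := if (j < k)%N then f j else g (j - k)%N.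

Definition single a b (j : nat) : R := if j is 0 then a else b.

Lemma splice_lt k f g j : (j < k)%N -> splice k f g j = f j.
Proof. by rewrite /splice => ->. Qed.

Lemma splice_addn k f g i : splice k f g (k + i)%N = g i.
Proof. by rewrite /splice ltnNge leq_addr addKn. Qed.

Lemma splice_ltS k f g j : (j < k)%N -> f k = g 0%N ->
  splice k f g j.+1 = f j.+1.
Proof.
move=> jk e; rewrite /splice; case: ltnP => // kj.
have -> : j.+1 = k by apply/anti_leq; rewrite jk.
by rewrite subnn e.
Qed.

Lemma splice_forall (P : R -> R -> R -> Prop) k1 k2 al1 ta1 al2 ta2 :
  al1 k1 = al2 0%N ->
  (forall j, (j < k1)%N -> P (al1 j) (al1 j.+1) (ta1 j)) ->
  (forall j, (j < k2)%N -> P (al2 j) (al2 j.+1) (ta2 j)) ->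
  forall j, (j < k1 + k2)%N ->
    P (splice k1 al1 al2 j) (splice k1 al1 al2 j.+1) (splice k1 ta1 ta2 j).
Proof.
move=> e h1 h2 j jk; have [jk1|/subnKC ej] := ltnP j k1.
  by rewrite splice_ltS // !splice_lt //; apply: h1.
by rewrite -ej -addnS !splice_addn; apply: h2; rewrite -(ltn_add2l k1) ej.
Qed.

Lemma div_sum_splice (V : zmodType) (F : R -> R -> R -> V) k1 k2 al1 ta1 al2 ta2 :
  al1 k1 = al2 0%N ->
  div_sum F (k1 + k2)%N (splice k1 al1 al2) (splice k1 ta1 ta2) =
  div_sum F k1 al1 ta1 + div_sum F k2 al2 ta2.
Proof.
move=> e; rewrite /div_sum big_split_ord; congr (_ + _); apply: eq_bigr => i _.
  by rewrite /= splice_ltS // !splice_lt.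
by rewrite -addnS !splice_addn.
Qed.

Lemma tagged_div_splice a b c k1 k2 al1 ta1 al2 ta2 :
  tagged_div a b k1 al1 ta1 -> tagged_div b c k2 al2 ta2 ->
  tagged_div a c (k1 + k2)%N (splice k1 al1 al2) (splice k1 ta1 ta2).
Proof.
move=> [h10 [h1k h1]] [h20 [h2k h2]]; split; last split.
- rewrite /splice; case: ifP => // /negbT; rewrite -leqNgt leqn0 => /eqP k10.
  by rewrite k10 subnn h20 -h1k k10 h10.
- by rewrite splice_addn.
- by apply: (splice_forall (P := fun x y t => x < y /\ x <= t <= y)); rewrite ?h1k.
Qed.

Lemma delta_fine_splice delta k1 k2 al1 ta1 al2 ta2 :
  al1 k1 = al2 0%N ->
  delta_fine delta k1 al1 ta1 -> delta_fine delta k2 al2 ta2 ->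
  delta_fine delta (k1 + k2)%N (splice k1 al1 al2) (splice k1 ta1 ta2).
Proof.
exact: (splice_forall (P := fun x y t => t - delta t < x /\ y < t + delta t)).
Qed.

Lemma tagged_div_single a b ta : a < b -> a <= ta 0%N <= b ->
  tagged_div a b 1 (single a b) ta.
Proof. by move=> ab tab; do 2 split => //; case. Qed.

Lemma delta_fine_single delta a b ta :
  ta 0%N - delta (ta 0%N) < a -> b < ta 0%N + delta (ta 0%N) ->
  delta_fine delta 1 (single a b) ta.
Proof. by move=> h1 h2; case. Qed.

Lemma tagged_div_size_gt0 a b k al ta : a < b -> tagged_div a b k al ta -> (0 < k)%N.
Proof. by case: k => // + [h0 [hk _]]; rewrite -h0 -hk ltxx. Qed.

Lemma tagged_div_mono a b k al ta : tagged_div a b k al ta ->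
  {in [pred j | (j <= k)%N] &, {homo al : i j / (i <= j)%N >-> i <= j}}.
Proof.
move=> [_ [_ h]] i j _; rewrite inE => jk ij; elim: j ij jk => [|j IH].
  by rewrite leqn0 => /eqP ->.
rewrite leq_eqVlt => /orP [/eqP -> // | /[!ltnS] ij jk].
by rewrite (le_trans (IH ij (ltnW jk))) //; have [/ltW] := h j jk.
Qed.

Lemma tagged_div_tag_itv a b k al ta : tagged_div a b k al ta ->
  forall j, (j < k)%N -> a <= ta j <= b.
Proof.
move=> hd j jk; have mono := tagged_div_mono hd; case: (hd) => <- [<- h].
have [_ /andP [t1 t2]] := h j jk.
by rewrite (le_trans _ t1) ?(le_trans t2) ?mono ?inE // ltnW.
Qed.

Lemma tagged_div_tag_lt a b k al ta : tagged_div a b k.+1 al ta ->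
  forall j, (j < k)%N -> ta j < b.
Proof.
move=> hd j jk; have mono := tagged_div_mono hd; case: (hd) => _ [<- h].
have [_ /andP [_ t2]] := h j (ltnW jk); have [lt _] := h k (ltnSn k).
by rewrite (le_lt_trans t2) // (le_lt_trans _ lt) ?mono ?inE // ltnW.
Qed.

Lemma tagged_div_le a b k al ta : tagged_div a b k al ta -> a <= b.
Proof.
by move=> hd; case: (hd) => <- [<- _]; apply: (tagged_div_mono hd); rewrite ?inE.
Qed.

Lemma tagged_div_behead a b k al ta : tagged_div a b k.+1 al ta ->
  tagged_div (al 1%N) b k (fun j => al j.+1) (fun j => al j.+1).
Proof.
move=> [_ [hk h]]; split => //; split => // j jk.
by have [lt _] := h j.+1 jk; rewrite lt lexx ltW.
Qed.

Lemma fine_div_last_tag delta a b k al ta :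
  (forall x, x < b -> delta x <= b - x) ->
  tagged_div a b k.+1 al ta -> delta_fine delta k.+1 al ta -> ta k = b.
Proof.
move=> small [_ [hk h]] fine; have [_ /andP [_ tb]] := h k (ltnSn k).
apply/eqP; rewrite eq_le -hk tb leNgt; apply/negP; rewrite hk => tlt.
have [_] := fine k (ltnSn k); have := small _ tlt; rewrite hk; lra.
Qed.

Lemma fine_div_first_tag delta a b k al ta :
  (forall x, a < x -> delta x <= x - a) ->
  tagged_div a b k.+1 al ta -> delta_fine delta k.+1 al ta -> ta 0%N = a.
Proof.
move=> small [h0 [_ h]] fine; have [_ /andP [alta _]] := h 0%N (ltn0Sn k).
apply/eqP; rewrite eq_le -h0 alta andbT leNgt; apply/negP; rewrite h0 => tgt.
have [+ _] := fine 0%N (ltn0Sn k); have := small _ tgt; rewrite h0; lra.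
Qed.

Lemma delta_fine_mono delta delta' k al ta : (forall t, delta' t <= delta t) ->
  delta_fine delta' k al ta -> delta_fine delta k al ta.
Proof.
move=> le_delta fine j jk; have [h1 h2] := fine j jk; split.
  by rewrite (le_lt_trans _ h1) // lerD2l lerN2.
by rewrite (lt_le_trans h2) // lerD2l.
Qed.

Lemma delta_fine_minl delta1 delta2 k al ta :
  delta_fine (fun t => Num.min (delta1 t) (delta2 t)) k al ta ->
  delta_fine delta1 k al ta.
Proof. by apply: delta_fine_mono => t; rewrite ge_min lexx. Qed.

Lemma delta_fine_minr delta1 delta2 k al ta :
  delta_fine (fun t => Num.min (delta1 t) (delta2 t)) k al ta ->
  delta_fine delta2 k al ta.
Proof. by apply: delta_fine_mono => t; rewrite ge_min lexx orbT. Qed.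

Lemma cousin delta a b : (forall t, 0 < delta t) -> a < b ->
  exists k al ta, tagged_div a b k al ta /\ delta_fine delta k al ta.
Proof.
move=> dpos ab.
pose P x := exists k al ta, tagged_div a x k al ta /\ delta_fine delta k al ta.
pose S : set R := fun x => a <= x <= b /\ P x.
have Sa : S a.
  by split; [rewrite lexx ltW | exists 0%N, (fun _ => a), (fun _ => a)].
have hS : has_sup S by split; [exists a | exists b => x [/andP [_ ->]]].
set c := sup S.
have cb : c <= b by apply: ge_sup; [exists a | move=> x [/andP [_ ->]]].
have [x [/andP [ax xb] Px] cx] := sup_adherent (dpos c) hS.
have xc : x <= c by apply: sup_upper_bound => //; split; rewrite ?ax.
have [<- //|xb'] := eqVneq x b.
have {xb xb'} xb : x < b by rewrite lt_neqAle xb xb'.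
have d2 : 0 < delta c / 2 by rewrite divr_gt0.
set y := Num.min b (c + delta c / 2).
have xy : x < y by rewrite lt_min xb (le_lt_trans xc) // ltrDl.
have Py : P y.
  have [k [al [ta [hd hf]]]] := Px.
  exists (k + 1)%N, (splice k al (single x y)), (splice k ta (fun _ => c)); split.
    apply: tagged_div_splice hd (tagged_div_single _ _) => //.
    by rewrite xc le_min cb lerDl ltW.
  apply: delta_fine_splice hf _; first by case: hd => _ [].
  apply: delta_fine_single; first exact: cx.
  rewrite (@le_lt_trans _ _ (c + delta c / 2)) ?ge_min ?lexx ?orbT //.
  by rewrite ltrD2l ltr_pdivrMr // ltr_pMr // ltr1n.
have yc : y <= c.
  apply: sup_upper_bound => //; split => //.
  by rewrite (ltW (le_lt_trans ax xy)) ge_min lexx.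
suff -> : b = y by [].
move: yc; rewrite /y ge_min => /orP [bc | ]; last by rewrite gerDl leNgt d2.
by rewrite min_l // (le_trans bc) // lerDl ltW.
Qed.

End TaggedDivision.

Section KSIntegral.
Variables (R : realType) (n m : nat) (A : R -> 'M[R]_n).
Implicit Types (a b c : R) (X Y : R -> 'M[R]_(n, m)) (I J : 'M[R]_(n, m)).

Lemma KS_sumE X k al ta :
  KS_sum A X k al ta = div_sum (fun a b t => (A b - A a) *m X t) k al ta.
Proof. by []. Qed.

Lemma KS_integralB a b X Y I J :
  KS_integral a b A X I -> KS_integral a b A Y J ->
  KS_integral a b A (fun r => X r - Y r) (I - J).
Proof.
move=> hX hY e e0; have e2 : 0 < e / 2 by rewrite divr_gt0.
have [d1 [d1p h1]] := hX _ e2; have [d2 [d2p h2]] := hY _ e2.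
exists (fun t => Num.min (d1 t) (d2 t)); split => [t|k al ta hd hf].
  by rewrite lt_min d1p d2p.
have -> : KS_sum A (fun r => X r - Y r) k al ta - (I - J) =
    (KS_sum A X k al ta - I) - (KS_sum A Y k al ta - J).
  rewrite /KS_sum (eq_bigr _ (fun j _ => mulmxBr _ _ _)) sumrB.
  by rewrite !opprD !opprK addrACA.
rewrite (le_lt_trans (ler_mxnormB _ _)) // (splitr e) ltrD ?h1 ?h2 //.
  exact: delta_fine_minl hf.
exact: delta_fine_minr hf.
Qed.

Lemma KS_integral_mulmxr p a b X (C : 'M[R]_(m, p)) I :
  KS_integral a b A X I -> KS_integral a b A (fun r => X r *m C) (I *m C).
Proof.
move=> hX e e0; set c := m%:R * mxnorm C + 1.
have c0 : 0 < c by rewrite ltr_wpDl // mulr_ge0 // mxnorm_ge0.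
have [d [dp h]] := hX (e / c) (divr_gt0 e0 c0).
exists d; split => // k al ta hd hf.
have -> : KS_sum A (fun r => X r *m C) k al ta - I *m C =
    (KS_sum A X k al ta - I) *m C.
  by rewrite mulmxBl /KS_sum mulmx_suml; under [in RHS]eq_bigr do rewrite -mulmxA.
apply: le_lt_trans (ler_mxnormM _ _) _.
apply: (@le_lt_trans _ _ (e / c * (m%:R * mxnorm C))).
  by rewrite mulrAC mulrC ler_wpM2r ?mulr_ge0 ?mxnorm_ge0 // ltW // h.
by rewrite -mulrA gtr_pMr // mulrC ltr_pdivrMr // mul1r ltrDl.
Qed.

Lemma KS_integral_split a c b X I1 I2 : a < c -> c < b ->
  KS_integral a b A X I1 -> KS_integral a c A X I2 ->
  KS_integral c b A X (I1 - I2).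
Proof.
move=> ac cb h1 h2 e e0; have e2 : 0 < e / 2 by rewrite divr_gt0.
have [d1 [d1p g1]] := h1 _ e2; have [d2 [d2p g2]] := h2 _ e2.
have dp t : 0 < Num.min (d1 t) (d2 t) by rewrite lt_min d1p d2p.
exists (fun t => Num.min (d1 t) (d2 t)); split => // k al ta hd hf.
have [k' [al' [ta' [hd' hf']]]] := cousin dp ac.
have e' : al' k' = al 0%N by case: hd' => _ [-> _]; case: hd.
have := g1 _ _ _ (tagged_div_splice hd' hd)
  (delta_fine_minl (delta_fine_splice e' hf' hf)).
rewrite KS_sumE div_sum_splice // -!KS_sumE => g1'.
have -> : KS_sum A X k al ta - (I1 - I2) = (KS_sum A X k' al' ta'
    + KS_sum A X k al ta - I1) - (KS_sum A X k' al' ta' - I2).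
  by rewrite [_ + KS_sum _ _ k _ _]addrC addrAC addrKA opprK opprB addrA.
rewrite (le_lt_trans (ler_mxnormB _ _)) // (splitr e) ltrD ?g2 //.
exact: delta_fine_minr hf'.
Qed.

End KSIntegral.

Section BoundedVariation.
Variables (R : realType) (n : nat) (A : R -> 'M[R]_n).
Implicit Types (a b t u v : R) (al : nat -> R).

Definition var_sum k al := div_sum (fun a b (_ : R) => mxnorm (A b - A a)) k al al.

Lemma var_sum_ge0 k al : 0 <= var_sum k al.
Proof. by apply: sumr_ge0 => j _; apply: mxnorm_ge0. Qed.

Lemma var_sum_splice k1 k2 al1 al2 : al1 k1 = al2 0%N ->
  var_sum (k1 + k2)%N (splice k1 al1 al2) = var_sum k1 al1 + var_sum k2 al2.
Proof. exact: div_sum_splice. Qed.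

Lemma var_sum_single a b : var_sum 1 (single a b) = mxnorm (A b - A a).
Proof. by rewrite /var_sum /div_sum big_ord1. Qed.

Lemma point_div_single a b : a < b -> tagged_div a b 1 (single a b) (single a b).
Proof. by move=> ab; apply: tagged_div_single; rewrite //= lexx ltW. Qed.

Lemma exists_point_div a b : a <= b -> exists k al, tagged_div a b k al al.
Proof.
rewrite le_eqVlt => /orP [/eqP <- | ab]; first by exists 0%N, (fun _ => a).
by exists 1%N, (single a b); apply: point_div_single.
Qed.

Hypothesis BV : locally_BV_J A.

Lemma locally_BV_sub a b : 0 <= a -> a < b -> exists M, forall u v k al,
  a <= u -> v <= b -> tagged_div u v k al al -> var_sum k al <= M.
Proof.
move=> a0 ab; have [M hM] := BV a0 ab; exists M => u v k al au vb hd.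
have [k1 [al1 hd1]] := exists_point_div au.
have [k2 [al2 hd2]] := exists_point_div vb.
have e1 : al1 k1 = al 0%N by case: hd1 => _ [-> _]; case: hd.
have e2 : splice k1 al1 al (k1 + k)%N = al2 0%N by rewrite splice_addn hd.2.1 hd2.1.
have : var_sum _ _ <= M := hM _ _ (tagged_div_splice (tagged_div_splice hd1 hd) hd2).
rewrite !var_sum_splice //; apply: le_trans.
by rewrite addrAC lerDr addr_ge0 ?var_sum_ge0.
Qed.

Lemma var_sum_unbounded_right t e :
  (forall t1, t < t1 -> exists u y k al,
     [/\ t < u, y <= t1, tagged_div u y k al al & e <= var_sum k al]) ->
  forall (N : nat) t1, t < t1 -> exists u k al,
    [/\ t < u, u < t1, tagged_div u t1 k al al & N%:R * e <= var_sum k al].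
Proof.
move=> big; elim=> [|N IH] t1 tt1.
  exists ((t + t1) / 2), 1%N, (single ((t + t1) / 2) t1).
  split; rewrite ?mul0r ?var_sum_ge0 ?midf_lt //.
  by apply: point_div_single; rewrite midf_lt.
have [u [y [k1 [al1 [tu yt1 hd1 he1]]]]] := big _ tt1.
have [u' [k0 [al0 [tu' u'u hd0 he0]]]] := IH u tu.
have [k2 [al2 hd2]] := exists_point_div yt1.
exists u', (k0 + k1 + k2)%N, (splice (k0 + k1) (splice k0 al0 al1) al2); split => //.
- by rewrite (lt_le_trans u'u) // (le_trans (tagged_div_le hd1)).
- exact: tagged_div_splice (tagged_div_splice hd0 hd1) hd2.
rewrite !var_sum_splice ?splice_addn ?hd1.2.1 ?hd2.1 ?hd0.2.1 ?hd1.1 //.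
by rewrite -nat1r mulrDl mul1r addrC -addrA lerD // (le_trans he1) // lerDl var_sum_ge0.
Qed.

Lemma BV_right_small_var t e : 0 <= t -> 0 < e -> exists t1, t < t1 /\
  forall u y k al, t < u -> y <= t1 -> tagged_div u y k al al -> var_sum k al < e.
Proof.
move=> t0 e0; apply: contrapT => nosmall.
have big : forall t1, t < t1 -> exists u y k al,
    [/\ t < u, y <= t1, tagged_div u y k al al & e <= var_sum k al].
  move=> t1 tt1; apply: contrapT => nobig; apply: nosmall; exists t1; split => //.
  move=> u y k al tu yt1 hd; rewrite ltNge; apply/negP => ev.
  by apply: nobig; exists u, y, k, al.
have tt1 : t < t + 1 by rewrite ltrDl.
have [M hM] := locally_BV_sub t0 tt1.
have [N hN] := exists_natr_mul_gt M e0.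
have [u [k [al [tu _ hd hv]]]] := var_sum_unbounded_right big N tt1.
have := hM _ _ _ _ (ltW tu) (lexx _) hd.
by rewrite leNgt (lt_le_trans hN hv).
Qed.

Lemma var_sum_unbounded_left t e :
  (forall t1, t1 < t -> exists u v,
     [/\ t1 < u, u < v, v < t & e <= mxnorm (A v - A u)]) ->
  forall (N : nat) t1, t1 < t -> exists v k al,
    [/\ t1 < v, v < t, tagged_div t1 v k al al & N%:R * e <= var_sum k al].
Proof.
move=> big; elim=> [|N IH] t1 t1t.
  exists ((t1 + t) / 2), 1%N, (single t1 ((t1 + t) / 2)).
  split; rewrite ?mul0r ?var_sum_ge0 ?midf_lt //.
  by apply: point_div_single; rewrite midf_lt.
have [u [v [t1u uv vt he]]] := big _ t1t.
have [v' [k0 [al0 [vv' v't hd0 he0]]]] := IH v vt.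
exists v', (1 + 1 + k0)%N, (splice 2 (splice 1 (single t1 u) (single u v)) al0).
split => //.
- by rewrite (lt_trans t1u) // (lt_trans uv).
- exact: tagged_div_splice (tagged_div_splice (point_div_single t1u)
    (point_div_single uv)) hd0.
rewrite !var_sum_splice ?splice_addn ?hd0.1 // !var_sum_single.
by rewrite -nat1r mulrDl mul1r lerD // (le_trans he) // lerDr mxnorm_ge0.
Qed.

Lemma BV_left_cauchy t e : 0 < t -> 0 < e -> exists t0, t0 < t /\
  forall u v, t0 < u -> u < v -> v < t -> mxnorm (A v - A u) < e.
Proof.
move=> t0 e0; apply: contrapT => nocauchy.
have big : forall t1, t1 < t -> exists u v,
    [/\ t1 < u, u < v, v < t & e <= mxnorm (A v - A u)].
  move=> t1 t1t; apply: contrapT => nobig; apply: nocauchy; exists t1; split => //.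
  move=> u v t1u uv vt; rewrite ltNge; apply/negP => ev.
  by apply: nobig; exists u, v.
have th : 0 <= t / 2 by rewrite divr_ge0 // ltW.
have t2t : t / 2 < t by rewrite ltr_pdivrMr // ltr_pMr // ltr1n.
have [M hM] := locally_BV_sub th t2t.
have [N hN] := exists_natr_mul_gt M e0.
have [v [k [al [_ vt hd hv]]]] := var_sum_unbounded_left big N t2t.
have := hM _ _ _ _ (lexx _) (ltW vt) hd.
by rewrite leNgt (lt_le_trans hN hv).
Qed.

End BoundedVariation.

Section LeftLimit.
Variable R : realType.

Definition left_liminf (f : R -> R) (t : R) : R :=
  sup [set y | exists t1, t1 < t /\ forall x, t1 < x < t -> y <= f x].

Lemma left_liminf_near (f : R -> R) (t t1 e : R) : t1 < t ->
  (forall x y, t1 < x < t -> t1 < y < t -> `|f y - f x| < e) ->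
  forall x, t1 < x < t -> `|left_liminf f t - f x| <= e.
Proof.
move=> t1t cauchy x hx.
rewrite /left_liminf; set S := (X in sup X).
have lb : S (f x - e).
  exists t1; split => // y hy.
  by have := cauchy x y hx hy; rewrite ltr_norml => /andP [? _]; lra.
have ub : forall y, S y -> y <= f x + e.
  move=> y [t2 [t2t h2]]; set z := (Num.max t1 t2 + t) / 2.
  have mt : Num.max t1 t2 < t by rewrite gt_max t1t t2t.
  have hz : Num.max t1 t2 < z < t by rewrite !midf_lt.
  have hz1 : t1 < z < t by move: hz; rewrite gt_max => /andP [/andP [-> _] ->].
  have hz2 : t2 < z < t by move: hz; rewrite gt_max => /andP [/andP [_ ->] ->].
  apply: le_trans (h2 z hz2) _.
  by have := cauchy x z hx hz1; rewrite ltr_norml => /andP [_ ?]; lra.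
have hs : has_sup S by split; [exists (f x - e) | exists (f x + e)].
have s1 : sup S <= f x + e by apply: ge_sup => //; exists (f x - e).
have s2 : f x - e <= sup S by apply: sup_upper_bound.
by rewrite ler_norml; apply/andP; split; lra.
Qed.

Lemma BV_left_limit n (A : R -> 'M[R]_n) t : locally_BV_J A -> 0 < t ->
  left_limit A t (\matrix_(i, j) left_liminf (fun s => A s i j) t).
Proof.
move=> BV t0 e e0; have e2 : 0 < e / 2 by rewrite divr_gt0.
have [t1 [t1t cauchy]] := BV_left_cauchy BV t0 e2.
have cauchy_entry i j x y : t1 < x < t -> t1 < y < t ->
    `|A y i j - A x i j| < e / 2.
  move=> /andP [t1x xt] /andP [t1y yt].
  have [xy|yx|->] := ltgtP x y; last by rewrite subrr normr0.
    have := entry_le_mxnorm (A y - A x) i j; rewrite !mxE => /le_lt_trans.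
    by apply; apply: cauchy.
  have := entry_le_mxnorm (A x - A y) i j; rewrite !mxE distrC => /le_lt_trans.
  by apply; apply: cauchy.
exists (t - t1); split => [|s /andP [ts st]]; first by rewrite subr_gt0.
have t1s : t1 < s < t by apply/andP; split; lra.
apply: (@le_lt_trans _ _ (e / 2)); last by rewrite ltr_pdivrMr // ltr_pMr // ltr1n.
apply: mxnorm_lub => [|i j]; first exact: ltW.
by rewrite !mxE distrC (left_liminf_near t1t) // => x y; apply: cauchy_entry.
Qed.

End LeftLimit.

Definition solution_from (R : realType) (n m : nat) (A : R -> 'M[R]_n) (r : R)
    (Z : R -> 'M[R]_(n, m)) : Prop :=
  forall u v, r <= u -> u < v -> KS_integral u v A Z (Z v - Z u).

Section Uniqueness.
Variables (R : realType) (n m : nat) (A : R -> 'M[R]_n).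
Hypothesis BV : locally_BV_J A.
Hypothesis invL : forall t : R, 0 < t -> forall L : 'M[R]_n, left_limit A t L ->
  1%:M - (A t - L) \in unitmx.
Variables (Z : R -> 'M[R]_(n, m)) (r : R).
Hypotheses (r0 : 0 <= r) (Zsol : solution_from A r Z) (Zr : Z r = 0).

(* Fine divisions with last tag [ts] reduce the integral over [r, ts] to the
   jump (A ts - A ts-) Z ts. *)
Lemma solution_zero_at_left_end ts : r < ts ->
  (forall u, r <= u -> u < ts -> Z u = 0) -> Z ts = 0.
Proof.
move=> rts Z0; have ts0 : 0 < ts by apply: le_lt_trans rts.
have hLL := BV_left_limit BV ts0; set L := \matrix_(i, j) _ in hLL.
suff MZ : (1%:M - (A ts - L)) *m Z ts = 0.
  by rewrite -(mulKmx (invL ts0 hLL) (Z ts)) MZ mulmx0.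
apply: (@mxnorm_eps_eq0 _ _ _ _ (1 + n%:R * mxnorm (Z ts))) => [|e e0].
  by rewrite ltr_wpDr // mulr_ge0 ?mxnorm_ge0.
have [d [dp hd]] := Zsol (lexx r) rts e0.
have [dl [dl0 hdl]] := hLL e e0.
pose d' x := if x < ts then Num.min (d x) (ts - x) else Num.min (d x) dl.
have d'p x : 0 < d' x by rewrite /d'; case: ifP; rewrite lt_min dp // subr_gt0.
have d'd x : d' x <= d x by rewrite /d'; case: ifP; rewrite ge_min lexx.
have [[|k] [al [ta [hdiv hf]]]] := cousin d'p rts.
  by have := tagged_div_size_gt0 rts hdiv.
have tats : ta k = ts.
  by apply: fine_div_last_tag hdiv hf => x xts; rewrite /d' xts ge_min lexx orbT.
have [_ [hk h]] := hdiv.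
have sum_last : KS_sum A Z k.+1 al ta = (A ts - A (al k)) *m Z ts.
  rewrite /KS_sum big_ord_recr /= big1 ?add0r ?tats ?hk // => j _.
  have /andP [rt _] := tagged_div_tag_itv hdiv (ltnW (ltn_ord j)).
  by rewrite Z0 ?mulmx0 ?(tagged_div_tag_lt hdiv).
have alk : ts - dl < al k < ts.
  rewrite -hk; have [lt _] := h k (ltnSn k); rewrite lt andbT.
  have [+ _] := hf k (ltnSn k); rewrite tats /d' ltxx hk.
  have : Num.min (d ts) dl <= dl by rewrite ge_min lexx orbT.
  lra.
have := hd _ _ _ hdiv (delta_fine_mono d'd hf); rewrite sum_last Zr subr0 => close.
have -> : (1%:M - (A ts - L)) *m Z ts =
    - ((A ts - A (al k)) *m Z ts - Z ts) + (L - A (al k)) *m Z ts.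
  by rewrite !mulmxBl mul1mx !opprB -addrA [(_ - _) + _]addrC subrKA.
rewrite mulrDr mulr1 (le_trans (ler_mxnormD _ _)) // mxnormN lerD //; first exact: ltW.
rewrite (le_trans (ler_mxnormM _ _)) // -mxnormN opprB -mulrA mulrCA.
by rewrite ler_wpM2r ?mulr_ge0 ?mxnorm_ge0 // ltW // hdl.
Qed.

(* With the first tag at [ts], where Z vanishes, the Stieltjes sums only see
   the variation of A to the right of [ts]. *)
Lemma solution_small_var_bound ts t1 B c : r <= ts -> Z ts = 0 -> 0 < c ->
  (forall u y k al, ts < u -> y <= t1 -> tagged_div u y k al al ->
     var_sum A k al < c) ->
  (forall y, ts <= y -> y <= t1 -> mxnorm (Z y) <= B) ->
  forall y, ts <= y -> y <= t1 -> mxnorm (Z y) <= n%:R * B * c.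
Proof.
move=> rts Zts c0 small_var ZB y tsy yt1.
have B0 : 0 <= B by rewrite (le_trans (mxnorm_ge0 (Z ts))) // ZB // (le_trans tsy).
have [->|yts] := eqVneq y ts; first by rewrite Zts mxnorm0 !mulr_ge0 // ltW.
have {yts tsy} tsy : ts < y by rewrite lt_neqAle eq_sym yts.
apply/ler_addgt0Pr => e e0.
have [d [dp hd]] := Zsol rts tsy e0.
pose d' x := if ts < x then Num.min (d x) (x - ts) else d x.
have d'p x : 0 < d' x by rewrite /d'; case: ifP; rewrite ?lt_min dp // subr_gt0.
have d'd x : d' x <= d x by rewrite /d'; case: ifP; rewrite ?ge_min lexx.
have [[|k] [al [ta [hdiv hf]]]] := cousin d'p tsy.
  by have := tagged_div_size_gt0 tsy hdiv.
have ta0 : ta 0%N = ts.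
  by apply: fine_div_first_tag hdiv hf => x tsx; rewrite /d' tsx ge_min lexx orbT.
have [h0 [_ h]] := hdiv.
have sum_tail : KS_sum A Z k.+1 al ta =
    \sum_(j < k) (A (al j.+2) - A (al j.+1)) *m Z (ta j.+1).
  by rewrite /KS_sum big_ord_recl /= ta0 Zts mulmx0 add0r.
have var_tail : var_sum A k (fun j => al j.+1) < c.
  apply: small_var (tagged_div_behead hdiv) => //.
  by rewrite -h0; have [] := h 0%N (ltn0Sn k).
have sum_bound : mxnorm (KS_sum A Z k.+1 al ta) <= n%:R * B * c.
  rewrite sum_tail (le_trans (ler_mxnorm_sum _)) //.
  apply: (@le_trans _ _ (n%:R * B * var_sum A k (fun j => al j.+1))); last first.
    by rewrite ler_wpM2l ?mulr_ge0 // ltW.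
  rewrite /var_sum /div_sum mulr_sumr ler_sum // => j _.
  rewrite (le_trans (ler_mxnormM _ _)) // mulrAC ler_wpM2r ?mxnorm_ge0 // ler_wpM2l //.
  have /andP [tst tyt] := tagged_div_tag_itv hdiv (ltn_ord j : j.+1 < k.+1)%N.
  by rewrite ZB // (le_trans tyt).
have := hd _ _ _ hdiv (delta_fine_mono d'd hf); rewrite Zts subr0 => close.
have -> : Z y = - (KS_sum A Z k.+1 al ta - Z y) + KS_sum A Z k.+1 al ta.
  by rewrite opprB addrNK.
by rewrite addrC (le_trans (ler_mxnormD _ _)) // mxnormN lerD // ltW.
Qed.

Variable B0 : R.
Hypothesis Zbound : forall t, r <= t -> mxnorm (Z t) <= B0.

Lemma solution_zero_right_nbhd ts : r <= ts -> Z ts = 0 ->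
  exists t1, ts < t1 /\ forall y, ts <= y -> y <= t1 -> Z y = 0.
Proof.
move=> rts Zts; have ts0 : 0 <= ts := le_trans r0 rts.
have B00 : 0 <= B0 by rewrite (le_trans (mxnorm_ge0 (Z r))) // Zbound.
have [c [c0 nc]] := exists_natr_mul_le_half R n.
have [t1 [tst1 small_var]] := BV_right_small_var BV ts0 c0.
exists t1; split => //.
have decay N y : ts <= y -> y <= t1 -> mxnorm (Z y) <= B0 / 2 ^+ N.
  elim: N y => [|N IH] y tsy yt1.
    by rewrite expr0 invr1 mulr1 Zbound // (le_trans rts).
  rewrite (le_trans (solution_small_var_bound rts Zts c0 small_var IH tsy yt1)) //.
  by rewrite exprS invfM mulrAC mulrCA ler_wpM2l // ler_wpM2r // invr_ge0 exprn_ge0.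
move=> y tsy yt1; apply: (@mxnorm_eps_eq0 _ _ _ _ 1) => // e e0.
have [N hN] := exists_natr_mul_gt B0 e0.
rewrite mulr1 (le_trans (decay N y tsy yt1)) // ler_pdivrMr ?exprn_gt0 //.
rewrite (le_trans (ltW hN)) // mulrC ler_wpM2l ?(ltW e0) // -natrX ler_nat.
by rewrite ltnW // ltn_expl.
Qed.

Lemma solution_zero t : r <= t -> Z t = 0.
Proof.
move=> rt; apply: contrapT => /eqP Zt.
pose S : set R := fun x => r <= x <= t /\ forall u, r <= u -> u <= x -> Z u = 0.
have Sr : S r.
  by split => [|u ru ur]; [rewrite lexx rt | rewrite (@le_anti _ _ u r) ?ru ?ur].
have hS : has_sup S by split; [exists r | exists t => x [/andP [_ ->]]].
set c := sup S.
have rc : r <= c by apply: sup_upper_bound.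
have ct : c <= t by apply: ge_sup; [exists r | move=> x [/andP [_ ->]]].
have below u : r <= u -> u < c -> Z u = 0.
  move=> ru uc; have uc0 : 0 < c - u by rewrite subr_gt0.
  have [x [_ hx] cx] := sup_adherent uc0 hS.
  by apply: hx => //; move: cx; rewrite opprB addrCA subrr addr0 => /ltW.
have Zc : Z c = 0.
  have [<-|cr] := eqVneq r c; first exact: Zr.
  by apply: solution_zero_at_left_end; rewrite ?lt_neqAle ?cr.
have {ct} ct : c < t by rewrite lt_neqAle ct andbT; apply: contra_neq Zt => <-.
have [t1 [ct1 Z0]] := solution_zero_right_nbhd rc Zc.
have Smin : S (Num.min t1 t).
  split=> [|u ru ut].
    by rewrite ge_min lexx orbT andbT le_min !(le_trans rc) ?ltW.
  have [uc|cu] := ltP u c; first exact: below.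
  by apply: Z0 => //; rewrite (le_trans ut) // ge_min lexx.
have := sup_upper_bound hS Smin.
by rewrite leNgt lt_min ct1 ct.
Qed.

End Uniqueness.

Section Transition.
Variables (R : realType) (n : nat) (A : R -> 'M[R]_n) (U : R -> R -> 'M[R]_n).
Hypothesis TM : transition_matrix A U.

Lemma transition_diag s : 0 <= s -> U s s = 1%:M.
Proof. by move=> s0; have [_ h _] := TM s0 s0; apply/eqP; rewrite -subr_eq0 h. Qed.

Lemma transition_solution s : 0 <= s -> solution_from A s (fun t => U t s).
Proof.
move=> s0 u v su uv; have u0 := le_trans s0 su; have v0 := le_trans u0 (ltW uv).
have [<-|snu] := eqVneq s u.
  rewrite transition_diag //; have [+ _ _] := TM v0 s0.
  by apply; rewrite (le_lt_trans su).
have {snu su} su : s < u by rewrite lt_neqAle snu.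
have [hv _ _] := TM v0 s0; have [hu _ _] := TM u0 s0.
have := KS_integral_split su uv (hv (lt_trans su uv)) (hu su).
by rewrite opprB subrKA.
Qed.

Hypothesis BV : locally_BV_J A.
Hypothesis invL : forall t : R, 0 < t -> forall L : 'M[R]_n, left_limit A t L ->
  1%:M - (A t - L) \in unitmx.

Lemma transition_cocycle C :
  (forall t s, 0 <= s -> s <= t -> mxnorm (U t s) <= C) ->
  forall s r t, 0 <= s -> s <= r -> r <= t -> U t s = U t r *m U r s.
Proof.
(* both sides solve the equation from [r] and agree at [r] *)
move=> UC s r t s0 sr rt; have r0 := le_trans s0 sr.
pose Z x := U x s - U x r *m U r s.
have Zsol : solution_from A r Z.
  move=> u v ru uv; have := KS_integralB (transition_solution s0 (le_trans sr ru) uv)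
    (KS_integral_mulmxr (U r s) (transition_solution r0 ru uv)).
  by rewrite mulmxBl /Z !opprD !opprK addrACA.
have Zr : Z r = 0 by rewrite /Z transition_diag // mul1mx subrr.
have C0 : 0 <= C by rewrite (le_trans (mxnorm_ge0 (U r r))) // UC.
have Zbound x : r <= x -> mxnorm (Z x) <= C + n%:R * C * C.
  move=> rx; rewrite (le_trans (ler_mxnormB _ _)) // lerD ?UC ?(le_trans sr) //.
  rewrite (le_trans (ler_mxnormM _ _)) // ler_pM ?mulr_ge0 ?mxnorm_ge0 ?UC //.
  by rewrite ler_wpM2l // UC.
by apply/eqP; rewrite -subr_eq0; apply/eqP/(solution_zero BV invL r0 Zsol Zr Zbound).
Qed.

End Transition.

Section Stability.
Variable R : realType.

Definition unif_attractive (n : nat) (U : R -> R -> 'M[R]_n) : Prop :=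
  exists delta0 : R, 0 < delta0 /\
    forall eps : R, 0 < eps -> exists T : R, 0 <= T /\
      forall (s0 : R) (x0 : 'cV[R]_n), 0 <= s0 -> mxnorm x0 < delta0 ->
        forall t, s0 + T <= t -> mxnorm (sol U t s0 x0) < eps.

Lemma mxnorm_le_of_cV_bound p q (M : 'M[R]_(p, q)) d e : 0 < d ->
  (forall x0 : 'cV[R]_q, mxnorm x0 < d -> mxnorm (M *m x0) < e) ->
  mxnorm M <= 2 * e / d.
Proof.
move=> d0 hM; have d2 : 0 < d / 2 by rewrite divr_gt0.
have [e0|e0] := ltP 0 e; last first.
  by have := hM 0; rewrite mulmx0 !mxnorm0 => /(_ d0); rewrite ltNge e0.
apply: mxnorm_lub => [|i j]; first by rewrite divr_ge0 ?mulr_ge0 ?ltW.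
pose x0 : 'cV[R]_q := (d / 2) *: delta_mx j 0.
have x0d : mxnorm x0 < d.
  apply: (@le_lt_trans _ _ (d / 2)); last by rewrite ltr_pdivrMr // ltr_pMr // ltr1n.
  apply: mxnorm_lub => [|i' j']; first exact: ltW.
  rewrite !mxE normrM ger0_norm ?ler_piMr ?(ltW d2) //.
  by case: (_ && _); rewrite ?normr1 ?normr0.
have := hM _ x0d; rewrite /x0 -scalemxAr -colE => Mx0.
have : `|M i j| * (d / 2) < e.
  apply: le_lt_trans Mx0; have := entry_le_mxnorm ((d / 2) *: col j M) i 0.
  by rewrite !mxE normrM ger0_norm ?(ltW d2) // mulrC.
by rewrite -ltr_pdivlMr // invf_div mulrCA mulrA => /ltW.
Qed.

Lemma unif_stable_bounded n (U : R -> R -> 'M[R]_n) : unif_stable U ->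
  exists C, 0 < C /\ forall t s, 0 <= s -> s <= t -> mxnorm (U t s) <= C.
Proof.
move=> /(_ 1 ltr01) [d [d0 hd]]; exists (2 * 1 / d); split.
  by rewrite divr_gt0.
by move=> t s s0 st; apply: mxnorm_le_of_cV_bound d0 _ => x0 x0d; apply: hd.
Qed.

Lemma unif_attractive_small n (U : R -> R -> 'M[R]_n) : unif_attractive U ->
  forall q, 0 < q -> exists T, 0 < T /\
    forall t s, 0 <= s -> s + T <= t -> mxnorm (U t s) <= q.
Proof.
move=> [d [d0 att]] q q0; have e0 : 0 < q * d / 2 by rewrite divr_gt0 ?mulr_gt0.
have [T [T0 hT]] := att _ e0; exists (T + 1); split => [|t s s0 st].
  by rewrite ltr_wpDl.
have sT : s + T <= t by rewrite (le_trans _ st) // lerD2l lerDl.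
have := mxnorm_le_of_cV_bound d0 (fun x0 x0d => hT s x0 s0 x0d t sT).
by rewrite (_ : 2 * (q * d / 2) / d = q) //; field; rewrite gt_eqF.
Qed.

Lemma unif_stable_of_bounded n (U : R -> R -> 'M[R]_n) K : 0 < K ->
  (forall t s, 0 <= s -> s <= t -> mxnorm (U t s) <= K) -> unif_stable U.
Proof.
move=> K0 UK e e0; have c0 : 0 < n%:R * K + 1 by rewrite ltr_wpDl // mulr_ge0 // ltW.
exists (e / (n%:R * K + 1)); split => [|s x0 s0 x0d t st]; first by rewrite divr_gt0.
rewrite /sol (le_lt_trans (ler_mxnormM _ _)) //.
apply: (@le_lt_trans _ _ ((n%:R * K + 1) * mxnorm x0)).
  rewrite ler_wpM2r ?mxnorm_ge0 // (@le_trans _ _ (n%:R * K)) ?lerDl //.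
  by rewrite ler_wpM2l // UK.
by rewrite mulrC -ltr_pdivlMr.
Qed.

Lemma unif_attractive_of_exp_bound n (U : R -> R -> 'M[R]_n) alpha K :
  0 < alpha -> 0 < K ->
  (forall t s, 0 <= s -> s <= t -> mxnorm (U t s) <= K * expR (- alpha * (t - s))) ->
  unif_attractive U.
Proof.
move=> a0 K0 Uexp; exists 1; split => // e e0.
have c0 : 0 < n%:R * K + 1 by rewrite ltr_wpDl // mulr_ge0 // ltW.
set T := (n%:R * K + 1) / (e * alpha).
have T0 : 0 <= T by rewrite divr_ge0 ?mulr_ge0 ?ltW.
exists T; split => // s x0 s0 x0_1 t sTt.
have st : s <= t by rewrite (le_trans _ sTt) ?lerDl.
have big_exp : n%:R * K < e * expR (alpha * (t - s)).
  have aT : alpha * T <= alpha * (t - s) by rewrite ler_wpM2l ?(ltW a0) //; lra.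
  have : e * (alpha * T) = n%:R * K + 1 by rewrite /T; field; rewrite !gt_eqF.
  have := expR_ge1Dx (alpha * (t - s)); have := ler_wpM2l (ltW e0) aT; nra.
rewrite /sol (le_lt_trans (ler_mxnormM _ _)) //.
apply: (@le_lt_trans _ _ (n%:R * (K * expR (- alpha * (t - s))) * 1)).
  by rewrite ler_pM ?mulr_ge0 ?mxnorm_ge0 ?ler_wpM2l ?Uexp // ltW.
by rewrite mulr1 mulrA mulNr expRN ltr_pdivrMr ?expR_gt0 // mulrC.
Qed.

Variables (n : nat) (U : R -> R -> 'M[R]_n) (C T q : R).
Hypotheses (T0 : 0 < T) (nq : n%:R * q <= 2^-1).
Hypothesis UC : forall t s, 0 <= s -> s <= t -> mxnorm (U t s) <= C.
Hypothesis Uq : forall t s, 0 <= s -> s + T <= t -> mxnorm (U t s) <= q.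
Hypothesis cocycle : forall s r t, 0 <= s -> s <= r -> r <= t -> U t s = U t r *m U r s.

Lemma geometric_decay (k : nat) s t : 0 <= s -> s + k%:R * T <= t ->
  mxnorm (U t s) <= C / 2 ^+ k.
Proof.
elim: k s => [|k IH] s s0 st.
  by rewrite expr0 invr1 mulr1 UC // -(addr0 s) -(mul0r T).
have sr : s <= s + T by rewrite lerDl ltW.
have rkt : s + T + k%:R * T <= t by rewrite -addrA -{1}(mul1r T) -mulrDl nat1r.
have rt : s + T <= t by rewrite (le_trans _ rkt) // lerDl mulr_ge0 // ltW.
rewrite (cocycle s0 sr rt) (le_trans (ler_mxnormM _ _)) //.
apply: (@le_trans _ _ (n%:R * (C / 2 ^+ k) * q)).
  rewrite ler_pM ?mulr_ge0 ?mxnorm_ge0 ?Uq // ler_wpM2l //.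
  by rewrite IH // (le_trans s0).
rewrite exprS invfM [X in _ <= X]mulrCA mulrAC ler_wpM2r //.
by rewrite divr_ge0 ?exprn_ge0 // (le_trans (mxnorm_ge0 (U s s))) // UC.
Qed.

Lemma exp_decay_of_cocycle : 0 < C -> exists alpha K, 0 < alpha /\ 0 < K /\
  forall t s, 0 <= s -> s <= t -> mxnorm (U t s) <= K * expR (- alpha * (t - s)).
Proof.
move=> C0; exists (ln 2 / T), (2 * C).
split; first by rewrite divr_gt0 // ln_gt0 // ltr1n.
split=> [|t s s0 st]; first by rewrite mulr_gt0.
have ts0 : 0 <= t - s by rewrite subr_ge0.
rewrite (le_trans _ (pow_half_le_expR (ltW C0) T0 ts0)) // geometric_decay //.
have /andP [kx _] := truncn_itv (divr_ge0 ts0 (ltW T0)).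
by rewrite -lerBrDl -ler_pdivlMr.
Qed.

End Stability.

Unset Implicit Arguments.
Set Strict Implicit.

Theorem theorem3p7 (R : realType) (n : nat) (A : R -> 'M[R]_n)
  (U : R -> R -> 'M[R]_n) :
  locally_BV_J A ->
  (forall t : R, 0 < t -> forall L : 'M[R]_n, left_limit A t L ->
     1%:M - (A t - L) \in unitmx) ->
  (forall t : R, 0 <= t -> forall L : 'M[R]_n, right_limit A t L ->
     1%:M + (L - A t) \in unitmx) ->
  transition_matrix A U ->
  (unif_asymp_stable U <->
   exists alpha K : R, 0 < alpha /\ 0 < K /\
     forall t s0 : R, 0 <= s0 -> s0 <= t ->
       mxnorm (U t s0) <= K * expR (- alpha * (t - s0))).
Proof.
(* invertibility of I + Delta^+ A only matters for the existence of U *)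
move=> BV invL _ TM; split.
- move=> [/unif_stable_bounded [C [C0 UC]] /unif_attractive_small small].
  have [q [q0 nq]] := exists_natr_mul_le_half R n.
  have [T [T0 Uq]] := small q q0.
  exact: exp_decay_of_cocycle T0 nq UC Uq (transition_cocycle TM BV invL UC) C0.
- move=> [alpha [K [a0 [K0 Uexp]]]].
  split; last exact: unif_attractive_of_exp_bound Uexp.
  apply: (unif_stable_of_bounded K0) => t s s0 st.
  rewrite (le_trans (Uexp t s s0 st)) // ger_pMr // expR_le1 mulNr oppr_le0.
  by rewrite mulr_ge0 ?subr_ge0 // ltW.
Qed.
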